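(* Let $Q=\sum_{i\in I} E_{i,\sigma(i)}\in M_n$ be a subpermutation. Then a matrix $A=[a_{ij}]\in M_n$ lies in the coset $QU_n=\{QU: U\in U_n\}$ if and only if $A$ meets the following conditions: (1) $A$ and $Q$ have the same places of nonzero rows, namely the nonzero rows of $A$ are exactly those indexed by $I$; (2) $A$ and $Q$ have the same places and values of the first nonzero entry in each nonzero row; precisely, for each $i\in I$, $a_{i,\sigma(i)}=1$ is the first nonzero entry of the $i$th row of $A$.
   Context: Let $\mathbb{F}$ be a fixed field and $M_n$ the set of $n\times n$ matrices over $\mathbb{F}$. Let $U_n$ be the group of $n\times n$ unit upper triangular matrices (upper triangular with all diagonal entries equal to $1$) over $\mathbb{F}$. For $i,j\in[n]=\{1,\ldots,n\}$, $E_{i,j}$ denotes the $n\times n$ matrix with $1$ in the $(i,j)$ entry and $0$ elsewhere. A matrix $Q\in M_n$ is a subpermutation if each of its rows and columns has at most one nonzero entry, which equals $1$. Every subpermutation $Q\in M_n$ can be written as $Q=\sum_{i\in I} E_{i,\sigma(i)}$, where $I\subseteq[n]$ and $\sigma: I\to\sigma(I)\subseteq[n]$ is a bijection (with $Q=0$ if $I=\emptyset$). *)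

From mathcomp Require Import all_boot all_order all_algebra.
Set Implicit Arguments. Unset Strict Implicit. Unset Printing Implicit Defensive.
Import GRing.Theory.
Local Open Scope ring_scope.

Definition subperm_mx (F : fieldType) (n : nat) (I : {set 'I_n})
  (sigma : 'I_n -> 'I_n) : 'M[F]_n :=
  \sum_(i in I) delta_mx i (sigma i).

Definition unit_upper (F : fieldType) (n : nat) (U : 'M[F]_n) : Prop :=
  (forall i j : 'I_n, (j < i)%N -> U i j = 0) /\ (forall i : 'I_n, U i i = 1).

From mathcomp Require Import all_boot all_order all_algebra.
Set Implicit Arguments. Unset Strict Implicit. Unset Printing Implicit Defensive.
Import GRing.Theory.
Local Open Scope ring_scope.

(* Left multiplication by Q moves row sigma(i) of U to row i for i in I and
   kills the other rows. So QU has its nonzero rows at I, and row i of QU is a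
   row of a unit upper triangular matrix with its leading 1 at sigma(i).
   Conversely, given A with these properties, the rows of A indexed by I,
   placed at the positions sigma(I), complete to a unit upper triangular U
   with A = QU by filling the remaining rows with those of the identity. *)

Section SubpermCoset.

Variables (F : fieldType) (n : nat) (I : {set 'I_n}) (sigma : 'I_n -> 'I_n).

Local Notation Q := (subperm_mx F I sigma).

Lemma subperm_mxE (i k : 'I_n) : Q i k = ((i \in I) && (k == sigma i))%:R.
Proof.
rewrite /subperm_mx summxE.
have [iI|niI] := boolP (i \in I).
  rewrite (bigD1 i) //= big1 ?addr0; first by rewrite mxE eqxx.
  by move=> i' /andP[_ ne_i'i]; rewrite mxE eq_sym (negbTE ne_i'i).
rewrite big1 // => i' i'I; rewrite mxE.
by case: eqP => // eq_ii'; rewrite eq_ii' i'I in niI.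
Qed.

Lemma subperm_mulmxE (U : 'M[F]_n) (i j : 'I_n) :
  (Q *m U) i j = if i \in I then U (sigma i) j else 0.
Proof.
rewrite mxE; under eq_bigr => k _ do rewrite subperm_mxE.
have [iI|_] := boolP (i \in I); last by rewrite big1 // => k _; rewrite mul0r.
rewrite (bigD1 (sigma i)) //= big1 ?addr0; first by rewrite eqxx mul1r.
by move=> k ne_k; rewrite (negbTE ne_k) mul0r.
Qed.

Lemma row_subperm_mulmx (U : 'M[F]_n) (i : 'I_n) :
  row i (Q *m U) = if i \in I then row (sigma i) U else 0.
Proof. by apply/rowP => j; rewrite mxE subperm_mulmxE; case: ifP; rewrite !mxE. Qed.

Section UnitUpper.

Variables (U : 'M[F]_n) (U_unit_upper : unit_upper U).

Lemma row_subperm_mulmx_eq0 (i : 'I_n) : (row i (Q *m U) == 0) = (i \notin I).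
Proof.
rewrite row_subperm_mulmx; case: (boolP (i \in I)) => [_|]; last by rewrite eqxx.
apply/negbTE/eqP =>  /rowP /(_ (sigma i)); rewrite !mxE (proj2 U_unit_upper).
exact/eqP/oner_neq0.
Qed.

Lemma subperm_mulmx_leading_one (i : 'I_n) : i \in I ->
  (Q *m U) i (sigma i) = 1 /\
  (forall j : 'I_n, (j < sigma i)%N -> (Q *m U) i j = 0).
Proof.
move=> iI; rewrite !subperm_mulmxE iI; split; first exact: (proj2 U_unit_upper).
by move=> j lt_j; rewrite subperm_mulmxE iI (proj1 U_unit_upper).
Qed.

End UnitUpper.

Definition upper_factor (A : 'M[F]_n) : 'M[F]_n :=
  \matrix_(k, j) if [pick i in I | sigma i == k] is Some i then A i j
                 else (k == j)%:R.

Section UpperFactor.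

Variables (sigma_inj : {in I &, injective sigma}) (A : 'M[F]_n).

Lemma upper_factor_sigma (i j : 'I_n) : i \in I ->
  upper_factor A (sigma i) j = A i j.
Proof.
move=> iI; rewrite mxE; case: pickP => [i' /andP[i'I /eqP eq_sigma]|no_i].
  by rewrite (sigma_inj i'I iI eq_sigma).
by move: (no_i i); rewrite iI eqxx.
Qed.

Lemma unit_upper_upper_factor :
  (forall i : 'I_n, i \in I ->
     A i (sigma i) = 1 /\ (forall j : 'I_n, (j < sigma i)%N -> A i j = 0)) ->
  unit_upper (upper_factor A).
Proof.
move=> leading_one; split=> [k j|k]; rewrite mxE.
  case: pickP => [i /andP[iI /eqP <-]|_]; first exact: (proj2 (leading_one i iI)).
  by case: eqP => // ->; rewrite ltnn.
case: pickP => [i /andP[iI /eqP <-]|_]; last by rewrite eqxx.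
exact: (proj1 (leading_one i iI)).
Qed.

Lemma subperm_mulmx_upper_factor :
  (forall i : 'I_n, i \notin I -> row i A = 0) -> Q *m upper_factor A = A.
Proof.
move=> A_zero_rows; apply/row_matrixP => i; rewrite row_subperm_mulmx.
have [iI|niI] := boolP (i \in I); last by rewrite A_zero_rows.
by apply/rowP => j; rewrite [LHS]mxE [RHS]mxE upper_factor_sigma.
Qed.

End UpperFactor.

End SubpermCoset.

Theorem lemma2p4 (F : fieldType) (n : nat) (I : {set 'I_n})
  (sigma : 'I_n -> 'I_n) (sigma_inj : {in I &, injective sigma})
  (A : 'M[F]_n) :
  (exists U : 'M[F]_n, unit_upper U /\ A = subperm_mx F I sigma *m U) <->
  ((forall i : 'I_n, row i A != 0 <-> i \in I) /\
   (forall i : 'I_n, i \in I ->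
      A i (sigma i) = 1 /\ (forall j : 'I_n, (j < sigma i)%N -> A i j = 0))).
Proof.
split=> [[U [U_unit_upper ->]]|[nonzero_rows leading_one]].
  split=> [i|]; last exact: subperm_mulmx_leading_one.
  by rewrite row_subperm_mulmx_eq0 // negbK.
exists (upper_factor I sigma A); split; first exact: unit_upper_upper_factor.
rewrite subperm_mulmx_upper_factor // => i niI.
by apply/eqP; apply: contraNT niI => /nonzero_rows.
Qed.
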